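(* Let $\mathcal{A}$ be a class of square arrays as in the context, let $\frac12\le\alpha\le1$, and let $A\in\mathcal{M}^*_{\mathcal{A}}(\alpha)$ be an array of order $n$. If $A_{ij}$ is a singleton, then $|\Psi_{ij}(A)|>\alpha(2n-1)$, and $R_i(A)$ contains more than $(2\alpha-1)n$ symbols that appear only in row $i$ of $A$, and $C_j(A)$ contains more than $(2\alpha-1)n$ symbols that appear only in column $j$ of $A$.
   Context: An array of order $n$ is an $n\times n$ array with a symbol in each cell; an entry is a triple $(i,j,A_{ij})$. A transversal of an $m\times m$ array is a set of $m$ entries, no two agreeing in row, column, or symbol; an array is transversal-free if it has no transversal. A symbol is a singleton if it occurs exactly once in the array and a clone otherwise; $A_{ij}$ is called a singleton/clone according to the symbol in cell $(i,j)$. $R_i(A)$, $C_j(A)$ are the sets of symbols in row $i$ and column $j$; $A(i\mid j)$ is the array obtained by deleting row $i$ and column $j$; $\Psi_{ij}(A)$ is the set of symbols appearing in $A$ but not in $A(i\mid j)$. Let $\mathcal{A}$ be a class of square arrays such that (i) deleting any one row and any one column from an array in $\mathcal{A}$ gives an array in $\mathcal{A}$, and (ii) changing the symbol in one cell of an array in $\mathcal{A}$ to a new symbol appearing nowhere else in the array gives an array in $\mathcal{A}$. For $\frac12\le\alpha\le1$, $\mathcal{M}_{\mathcal{A}}(\alpha)$ is the set of transversal-free arrays in $\mathcal{A}$ whose number of distinct symbols is at least $\alpha$ times the number of cells. $\mathcal{M}^*_{\mathcal{A}}(\alpha)\subseteq\mathcal{M}_{\mathcal{A}}(\alpha)$ consists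 of those $A\in\mathcal{M}_{\mathcal{A}}(\alpha)$ such that no array in $\mathcal{M}_{\mathcal{A}}(\alpha)$ has smaller order than $A$, and no array in $\mathcal{M}_{\mathcal{A}}(\alpha)$ of the same order as $A$ has more distinct symbols than $A$. *)

From HB Require Import structures.
From mathcomp Require Import all_boot all_order all_algebra.
Set Implicit Arguments. Unset Strict Implicit. Unset Printing Implicit Defensive.
Import Order.TTheory GRing.Theory Num.Theory.

(* An array of order n is an n x n matrix of symbols; symbols are naturals
   (an infinite supply, so that "a new symbol" always exists). *)
Notation array n := ('M[nat]_n).

Definition array_class := forall n : nat, array n -> Prop.

Definition del_rc (m : nat) (A : array m.+1) (i j : 'I_m.+1) : array m :=
  row' i (col' j A).

Definition change_cell (n : nat) (A : array n) (i j : 'I_n) (s : nat) : array n :=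
  \matrix_(k, l) (if (k == i) && (l == j) then s else A k l).

Definition closed_del (P : array_class) : Prop :=
  forall (m : nat) (A : array m.+1) (i j : 'I_m.+1), P m.+1 A -> P m (del_rc A i j).

Definition closed_new_symbol (P : array_class) : Prop :=
  forall (n : nat) (A : array n) (i j : 'I_n) (s : nat),
    P n A ->
    (forall k l : 'I_n, (k, l) != (i, j) -> A k l != s) ->
    P n (change_cell A i j s).

Definition is_transversal (n : nat) (A : array n) (T : {set 'I_n * 'I_n}) : Prop :=
  #|T| = n /\
  {in T &, forall c d : 'I_n * 'I_n, c != d ->
     [/\ c.1 != d.1, c.2 != d.2 & A c.1 c.2 != A d.1 d.2]}.

Definition transversal_free (n : nat) (A : array n) : Prop :=
  ~ exists T : {set 'I_n * 'I_n}, is_transversal A T.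

Definition symbols (n : nat) (A : array n) : seq nat :=
  undup [seq A k l | k <- enum 'I_n, l <- enum 'I_n].

Definition nsym (n : nat) (A : array n) : nat := size (symbols A).

Definition inM (R : realFieldType) (P : array_class) (alpha : R) (n : nat) (A : array n) : Prop :=
  [/\ P n A, transversal_free A & (alpha * (n * n)%:R <= (nsym A)%:R)%R].

Definition inMstar (R : realFieldType) (P : array_class) (alpha : R) (n : nat) (A : array n) : Prop :=
  [/\ inM P alpha A,
      (forall (m : nat) (B : array m), inM P alpha B -> n <= m)
    & (forall B : array n, inM P alpha B -> nsym B <= nsym A)].

Definition singleton_cell (n : nat) (A : array n) (i j : 'I_n) : Prop :=
  #|[set c : 'I_n * 'I_n | A c.1 c.2 == A i j]| = 1.

Definition Psi (m : nat) (A : array m.+1) (i j : 'I_m.+1) : seq nat :=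
  [seq s <- symbols A | s \notin symbols (del_rc A i j)].

Definition row_syms (n : nat) (A : array n) (i : 'I_n) : seq nat :=
  undup [seq A i l | l <- enum 'I_n].
Definition col_syms (n : nat) (A : array n) (j : 'I_n) : seq nat :=
  undup [seq A k j | k <- enum 'I_n].

Definition only_in_row (n : nat) (A : array n) (i : 'I_n) : seq nat :=
  [seq s <- row_syms A i | [forall k, forall l, (A k l == s) ==> (k == i)]].
Definition only_in_col (n : nat) (A : array n) (j : 'I_n) : seq nat :=
  [seq s <- col_syms A j | [forall k, forall l, (A k l == s) ==> (l == j)]].

From HB Require Import structures.
From mathcomp Require Import all_boot all_order all_algebra.
From mathcomp Require Import lra.
Import Order.TTheory GRing.Theory Num.Theory.
Set Implicit Arguments. Unset Strict Implicit.
Local Open Scope ring_scope.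

(* A(i|j) stays in the class
   and stays transversal-free, since a transversal of A(i|j) extends by the
   singleton cell; by minimality of the order it has fewer than alpha n^2
   symbols, while A has at least alpha (n+1)^2.  Hence more than
   alpha (2n+1) symbols lie in Psi_ij.  Each of them occurs only in row i or
   column j, and those not confined to row i occur in column j outside row i,
   so at most n of them are not confined to row i; symmetrically for
   column j. *)

Lemma del_rcE m (A : array m.+1) i j k l :
  del_rc A i j k l = A (lift i k) (lift j l).
Proof. by rewrite /del_rc !mxE. Qed.

Lemma del_rc_tr m (A : array m.+1) i j : del_rc A^T j i = (del_rc A i j)^T.
Proof. by apply/matrixP => k l; rewrite !mxE. Qed.

Lemma symbolsP n (A : array n) s :
  reflect (exists k l, A k l = s) (s \in symbols A).
Proof.
rewrite mem_undup; apply: (iffP allpairsP).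
  by move=> [[k l] [_ _ ->]]; exists k, l.
by move=> [k [l <-]]; exists (k, l); rewrite !mem_enum.
Qed.

Lemma symbols_tr n (A : array n) : symbols A^T =i symbols A.
Proof.
by move=> s; apply/symbolsP/symbolsP => -[k [l <-]]; exists l, k; rewrite mxE.
Qed.

Lemma singleton_cell_eq n (A : array n) i j k l :
  singleton_cell A i j -> A k l = A i j -> k = i /\ l = j.
Proof.
move=> /eqP /cards1P [c Ec] Ekl.
have : (k, l) \in [set c : 'I_n * 'I_n | A c.1 c.2 == A i j] by rewrite inE /= Ekl.
have : (i, j) \in [set c : 'I_n * 'I_n | A c.1 c.2 == A i j] by rewrite inE.
by rewrite Ec !in_set1 => /eqP <- /eqP [-> ->].
Qed.

Lemma transversal_free_del_rc m (A : array m.+1) i j :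
  singleton_cell A i j -> transversal_free A -> transversal_free (del_rc A i j).
Proof.
move=> Hs HA [T [cardT HT]]; apply: HA.
pose f (c : 'I_m * 'I_m) := (lift i c.1, lift j c.2).
have f_inj : injective f.
  move=> [a b] [c d] /eqP; rewrite xpair_eqE !(inj_eq lift_inj).
  by move=> /= /andP[/eqP-> /eqP->].
have ij_notin_fT : (i, j) \notin f @: T.
  by apply/imsetP => -[c _ [e _]]; move: (neq_lift i c.1); rewrite -e eqxx.
have new_symbol c : A (f c).1 (f c).2 != A i j.
  apply/eqP => /(singleton_cell_eq Hs) [/= e _].
  by move: (neq_lift i c.1); rewrite e eqxx.
exists ((i, j) |: (f @: T)); split; first by rewrite cardsU1 ij_notin_fT card_imset // cardT.
move=> c d; rewrite !in_setU1.
move=> /orP[/eqP-> | /imsetP[c' c'T ->]] /orP[/eqP-> | /imsetP[d' d'T ->]].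
- by rewrite eqxx.
- by move=> _; split; [exact: neq_lift | exact: neq_lift | rewrite eq_sym].
- by move=> _; split; [rewrite eq_sym; exact: neq_lift.. | exact: new_symbol].
- move=> ne; have /(HT c' d' c'T d'T) [ne1 ne2 ne3] : c' != d'.
    by apply: contraNneq ne => ->.
  by split; rewrite /= ?(inj_eq lift_inj) // -!del_rcE.
Qed.

Lemma notin_del_rc_symbols m (A : array m.+1) i j k l :
  A k l \notin symbols (del_rc A i j) -> k = i \/ l = j.
Proof.
move=> H; have [->|ki] := eqVneq k i; first by left.
have [->|lj] := eqVneq l j; first by right.
move: ki lj; rewrite [k == i]eq_sym [l == j]eq_sym => /unlift_some [k' hk _] /unlift_some [l' hl _].
by case/negP: H; apply/symbolsP; exists k', l'; rewrite del_rcE hk hl.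
Qed.

Lemma nsym_le_del_rc_Psi m (A : array m.+1) i j :
  (nsym A <= nsym (del_rc A i j) + size (Psi A i j))%N.
Proof.
rewrite /nsym /Psi size_filter.
rewrite -(count_predC (mem (symbols (del_rc A i j)))) leq_add2r -size_filter.
apply: uniq_leq_size; first exact: filter_uniq (undup_uniq _).
by move=> s; rewrite mem_filter => /andP[].
Qed.

Lemma size_Psi_le_only_in_row m (A : array m.+1) i j :
  (size (Psi A i j) <= size (only_in_row A i) + m)%N.
Proof.
have -> : (size (only_in_row A i) + m =
           size (only_in_row A i ++ [seq A (lift i k) j | k <- enum 'I_m]))%N.
  by rewrite size_cat size_map size_enum_ord.
apply: uniq_leq_size; first exact: filter_uniq (undup_uniq _).
move=> s; rewrite mem_filter mem_cat => /andP[notB /symbolsP [k [l Ekl]]].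
have [in_row|] := boolP [forall k, forall l, (A k l == s) ==> (k == i)].
  apply/orP; left; rewrite mem_filter in_row mem_undup.
  move: in_row => /forallP /(_ k) /forallP /(_ l); rewrite Ekl eqxx => /eqP ki.
  by apply/mapP; exists l; rewrite ?mem_enum // -ki.
move=> /forallPn [k2 /forallPn [l2]]; rewrite negb_imply => /andP[/eqP E2 ki].
have [ki'|lj] : k2 = i \/ l2 = j by apply: (notin_del_rc_symbols (A := A)); rewrite E2.
  by rewrite ki' eqxx in ki.
move: ki; rewrite eq_sym => /unlift_some [k' hk _].
by apply/orP; right; apply/mapP; exists k'; rewrite ?mem_enum // -hk -lj E2.
Qed.

Lemma only_in_col_tr n (A : array n) j : only_in_col A j = only_in_row A^T j.
Proof.
rewrite /only_in_col /only_in_row /row_syms.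
under [in RHS]eq_map do rewrite mxE.
apply: eq_filter => s; apply/forallP/forallP => H k; apply/forallP => l.
  by rewrite mxE; move/forallP: (H l) => /(_ k).
by move/forallP: (H l) => /(_ k); rewrite mxE.
Qed.

Lemma size_Psi_tr m (A : array m.+1) i j : size (Psi A^T j i) = size (Psi A i j).
Proof.
apply: perm_size; apply: uniq_perm; rewrite ?filter_uniq ?undup_uniq //.
by move=> s; rewrite !mem_filter del_rc_tr !symbols_tr.
Qed.

Lemma size_Psi_le_only_in_col m (A : array m.+1) i j :
  (size (Psi A i j) <= size (only_in_col A j) + m)%N.
Proof. by rewrite only_in_col_tr -size_Psi_tr size_Psi_le_only_in_row. Qed.

Lemma nsym_del_rc_lt (R : realFieldType) (P : array_class) (alpha : R)
  (HPdel : closed_del P) (m : nat) (A : array m.+1) (i j : 'I_m.+1) :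
  inMstar P alpha A -> singleton_cell A i j ->
  (nsym (del_rc A i j))%:R < alpha * (m * m)%N%:R.
Proof.
move=> [[PA tfA _] minA _] Hs; rewrite ltNge; apply/negP => many.
have := minA m _ (And3 (HPdel _ _ _ _ PA) (transversal_free_del_rc Hs tfA) many).
by rewrite ltnn.
Qed.

Theorem mainTheorem5 (R : realFieldType) (P : array_class)
  (HPdel : closed_del P) (HPnew : closed_new_symbol P)
  (alpha : R) (Ha1 : 1 / 2%:R <= alpha) (Ha2 : alpha <= 1)
  (n : nat) (A : array n.+1) (HA : inMstar P alpha A)
  (i j : 'I_n.+1) (Hs : singleton_cell A i j) :
  [/\ alpha * (2 * n.+1 - 1)%N%:R < (size (Psi A i j))%:R,
      (2%:R * alpha - 1) * n.+1%:R < (size (only_in_row A i))%:R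
    & (2%:R * alpha - 1) * n.+1%:R < (size (only_in_col A j))%:R].
Proof.
have few_B := nsym_del_rc_lt HPdel HA Hs.
have [[_ _ many_A] _ _] := HA.
have lost : (nsym A)%:R <= (nsym (del_rc A i j))%:R + (size (Psi A i j))%:R :> R.
  by rewrite -natrD ler_nat nsym_le_del_rc_Psi.
have row : (size (Psi A i j))%:R <= (size (only_in_row A i))%:R + n%:R :> R.
  by rewrite -natrD ler_nat size_Psi_le_only_in_row.
have col : (size (Psi A i j))%:R <= (size (only_in_col A j))%:R + n%:R :> R.
  by rewrite -natrD ler_nat size_Psi_le_only_in_col.
set x : R := n%:R; set p : R := (size (Psi A i j))%:R.
have Sx : n.+1%:R = x + 1 :> R by rewrite -natr1.
have -> : (2 * n.+1 - 1)%N%:R = 2 * x + 1 :> R.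
  by rewrite mulnS addSn subSS subn0 natrD natrM addrC.
rewrite natrM Sx in many_A; rewrite natrM -/x in few_B.
have Psi_big : alpha * (2 * x + 1) < p by lra.
by split; lra.
Qed.
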